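(* Let $q$ be even, $P_{22}\in\mathbb{S}_q$ with $P_{22}\succ0$, $Q_{22}\in\mathbb{S}_q$ with $Q_{22}\succ0$, $\Theta_2\in\mathbb{A}_q$ nonsingular, and suppose the complex Hermitian matrix $P_{22}+i\Theta_2$ is positive semi-definite. Let $\Xi\in\mathbb{A}_q$, and set $N:=Q_{22}^{-1}\Xi$, $S:=\Theta_2P_{22}^{-1}$. Let $D\in\mathbb{R}^{p\times m_1}$ with $DD^{T}=I_p$ and $\Delta:=DJ_1D^{T}$. If $\rho(N)<1$, then the three linear operators $$X\mapsto X-NXS\ \text{on}\ \mathbb{R}^{q\times q},\qquad X\mapsto X-NXJ_2\ \text{on}\ \mathbb{R}^{q\times m_2},\qquad X\mapsto X-NX\Delta\ \text{on}\ \mathbb{R}^{q\times p}$$ are all invertible.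
   Context: $\mathbb{S}_k$ and $\mathbb{A}_k$ denote the spaces of real symmetric and real antisymmetric $k\times k$ matrices; $\rho(\cdot)$ is the spectral radius; $i=\sqrt{-1}$. For even $m_k$, $\mu_k=m_k/2$ and $J_k:=\begin{bmatrix}0&I_{\mu_k}\\-I_{\mu_k}&0\end{bmatrix}$ ($k=1,2$). *)

From HB Require Import structures.
From mathcomp Require Import all_boot all_order all_algebra.
Set Implicit Arguments. Unset Strict Implicit. Unset Printing Implicit Defensive.
Import Order.TTheory GRing.Theory Num.Theory.
Local Open Scope ring_scope.

(* Throughout, C is an algebraically closed numeric field (e.g. the complex
   numbers); "real matrices" are matrices over C with entries in Num.real. *)

Section Defs.
Variable C : numClosedFieldType.

Definition real_mx {m n} (A : 'M[C]_(m, n)) : Prop := A \is a realmx.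

Definition sym_real {n} (A : 'M[C]_n) : Prop := real_mx A /\ A^T = A.
Definition antisym_real {n} (A : 'M[C]_n) : Prop := real_mx A /\ A^T = - A.

Definition ctrmx {m n} (A : 'M[C]_(m, n)) : 'M[C]_(n, m) := (map_mx Num.conj A)^T.

Definition posdef_real {n} (A : 'M[C]_n) : Prop :=
  sym_real A /\
  forall x : 'cV[C]_n, real_mx x -> x != 0 -> 0 < (x^T *m A *m x) 0 0.

Definition hermitian {n} (A : 'M[C]_n) : Prop := ctrmx A = A.
Definition psd_herm {n} (A : 'M[C]_n) : Prop :=
  hermitian A /\ forall x : 'cV[C]_n, 0 <= (ctrmx x *m A *m x) 0 0.

Definition eigenvalues {n} (A : 'M[C]_n) : seq C :=
  sval (closed_field_poly_normal (char_poly A)).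

Definition spectral_radius {n} (A : 'M[C]_n) : C :=
  \big[Num.max/0]_(z <- eigenvalues A) `|z|.

(* J_k for m_k = mu + mu *)
Definition Jmx (mu : nat) : 'M[C]_(mu + mu) :=
  block_mx 0 1%:M (- 1%:M) 0.

Definition invertible_on_real {q k} (L : 'M[C]_(q, k) -> 'M[C]_(q, k)) : Prop :=
  (forall X, real_mx X -> real_mx (L X)) /\
  forall Y, real_mx Y -> exists! X, real_mx X /\ L X = Y.

End Defs.

From HB Require Import structures.
From mathcomp Require Import all_boot all_order all_algebra.
Import Order.TTheory GRing.Theory Num.Theory.
Local Open Scope ring_scope.
Set Implicit Arguments. Unset Strict Implicit.

(* The Stein operator is linear on a finite-dimensional space, so it is
   bijective as soon as it is injective; when N and S are real it commutes
   with entrywise conjugation, so the preimage of a real matrix is real.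

   If X = N X S then p(N) X S^k = X p~(S) for every
   p = prod (x - z) of degree k, where p~ = prod (1 - z S).  Taking for p the
   characteristic polynomial of N (Cayley-Hamilton) gives X p~(S) = 0; if all
   eigenvalues z of N satisfy |z| < 1 and all left eigenvalues mu of S satisfy
   |mu| <= 1, every factor 1 - z S is injective on rows, whence X = 0.

   The left eigenvalues of S = Theta P^-1, of J and of Delta = D J D^T are
   bounded through a generalized eigenvalue estimate: if T x = nu P x with
   x <> 0, P symmetric positive definite, T antisymmetric and P + iT positive
   semi-definite, then x^* (P +- iT) x >= 0 forces |nu| <= 1.  For J and
   Delta one takes P = 1, using that 1 + iJ is half its own square. *)

Section RealMatrices.
Variable C : numClosedFieldType.

Lemma realE m n (A : 'M[C]_(m, n)) : real_mx A <-> map_mx Num.conj A = A.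
Proof.
split.
  by move=> /mxOverP rA; apply/matrixP=> i j; rewrite mxE; apply/eqP; rewrite -CrealE.
by move=> cA; apply/mxOverP=> i j; rewrite CrealE -{2}cA mxE.
Qed.

Lemma realM m n p (A : 'M[C]_(m, n)) (B : 'M[C]_(n, p)) :
  real_mx A -> real_mx B -> real_mx (A *m B).
Proof. by move=> /realE cA /realE cB; apply/realE; rewrite map_mxM cA cB. Qed.

Lemma realB m n (A B : 'M[C]_(m, n)) :
  real_mx A -> real_mx B -> real_mx (A - B).
Proof. by move=> /realE cA /realE cB; apply/realE; rewrite map_mxB cA cB. Qed.

Lemma realT m n (A : 'M[C]_(m, n)) : real_mx A -> real_mx A^T.
Proof. by move=> /realE cA; apply/realE; rewrite -map_trmx cA. Qed.

Lemma realV n (A : 'M[C]_n) : real_mx A -> real_mx (invmx A).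
Proof. by move=> /realE cA; apply/realE; rewrite map_invmx cA. Qed.

End RealMatrices.

Definition trivial_kernel (U V : zmodType) (f : U -> V) : Prop :=
  forall x, f x = 0 -> x = 0.

Section SteinOperator.
Variables (C : numClosedFieldType) (q k : nat) (N : 'M[C]_q) (S : 'M[C]_k).

Definition stein (X : 'M[C]_(q, k)) : 'M[C]_(q, k) := X - N *m X *m S.

Fact stein_is_linear : linear stein.
Proof.
move=> a X Y; rewrite /stein mulmxDr mulmxDl -scalemxAr -scalemxAl.
by rewrite scalerBr opprD addrACA.
Qed.

HB.instance Definition _ :=
  GRing.isLinear.Build C 'M[C]_(q, k) 'M[C]_(q, k) _ stein stein_is_linear.

(* Rank-nullity for the Stein operator: a trivial kernel makes it surjective. *)
Lemma stein_surj : trivial_kernel stein ->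
  forall Y, exists X, stein X = Y.
Proof.
move=> ker0 Y; pose M := lin_mx stein.
have uM : M \in unitmx.
  rewrite unitmxE unitfE; apply/negP => /det0P [v v_nz vM0].
  have : vec_mx v = 0 by apply: ker0; rewrite -mx_rV_lin -/M vM0 linear0.
  by move/eqP; rewrite -mxvec_eq0 vec_mxK (negbTE v_nz).
exists (vec_mx (mxvec Y *m invmx M)).
by rewrite -mx_rV_lin -/M mulmxKV // mxvecK.
Qed.

(* With real coefficients, injectivity gives invertibility on real matrices:
   the conjugate of a solution is again a solution, hence equals it. *)
Lemma stein_invertible : real_mx N -> real_mx S ->
  trivial_kernel stein -> invertible_on_real stein.
Proof.
move=> rN rS ker0.
have inj : injective stein.
  move=> X Y eXY; apply/eqP; rewrite -subr_eq0; apply/eqP/ker0.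
  by rewrite linearB /= eXY subrr.
split=> [X rX|Y rY]; first by apply: realB => //; apply: realM => //; apply: realM.
have [X sX] := stein_surj ker0 Y.
exists X; split=> [|X' [_ sX']]; last by apply: inj; rewrite sX sX'.
split=> //; apply/realE/inj; rewrite sX -{1}((realE Y).1 rY) -sX /stein.
by rewrite !map_mxB !map_mxM ((realE N).1 rN) ((realE S).1 rS).
Qed.

End SteinOperator.

Section SteinKernel.
Variables (C : numClosedFieldType) (k : nat) (S : 'M[C]_k).

Definition left_spectrum_le1 : Prop :=
  forall (w : 'rV[C]_k) mu, w != 0 -> w *m S = mu *: w -> `|mu| <= 1.

Hypothesis S_le1 : left_spectrum_le1.

(* For |z| < 1 the factor 1 - z S is injective on rows: a nonzero row w
   with w = z w S would be a left eigenvector of eigenvalue 1/z. *)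
Lemma factor_inj m z (X : 'M[C]_(m, k)) :
  `|z| < 1 -> X *m (1%:M - z *: S) = 0 -> X = 0.
Proof.
move=> z_lt1 X0; apply/row_matrixP => i; rewrite row0.
have /eqP : row i X *m (1%:M - z *: S) = 0 by rewrite -row_mul X0 row0.
rewrite mulmxBr mulmx1 -scalemxAr subr_eq0 => /eqP wE.
have [z0|z_nz] := eqVneq z 0; first by rewrite wE z0 scale0r.
apply/eqP/negPn/negP => w_nz.
have : row i X *m S = z^-1 *: row i X by rewrite {2}wE scalerA mulVf ?scale1r.
move/(S_le1 w_nz); rewrite normfV invf_le1 ?normr_gt0 // => /le_lt_trans.
by move/(_ _ z_lt1); rewrite ltxx.
Qed.

Lemma comm_factor_prod (s : seq C) : GRing.comm S (\prod_(y <- s) (1 - y *: S)).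
Proof.
apply: commr_prod => y _; apply: commrB; first exact: commr1.
by rewrite /GRing.comm -!mulmxE -scalemxAr -scalemxAl.
Qed.

Lemma stein_prod_transfer q (N : 'M[C]_q) (X : 'M[C]_(q, k)) (s : seq C) :
  N *m X *m S = X ->
  (\prod_(z <- s) (N - z%:M)) *m X *m S ^+ size s =
  X *m \prod_(z <- s) (1 - z *: S).
Proof.
move=> fixX; elim: s => [|a s IH]; first by rewrite !big_nil expr0 mul1mx mulmx1.
set Q := \prod_(z <- s) (1 - z *: S).
have QS : Q *m S = S *m Q by rewrite mulmxE (comm_factor_prod s).
rewrite !big_cons /= exprSr.
have -> : (N - a%:M) * \prod_(z <- s) (N - z%:M) *m X *m (S ^+ size s * S) =
          (N - a%:M) *m (\prod_(z <- s) (N - z%:M) *m X *m S ^+ size s) *m S.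
  by rewrite -!mulmxE !mulmxA.
rewrite IH -/Q mulmxBl mul_scalar_mx mulmxBl -scalemxAl !mulmxA.
rewrite -!(mulmxA _ Q S) QS !mulmxA fixX.
by rewrite mulmxBr mulmx1 -scalemxAr mulmxBl -scalemxAl.
Qed.

Lemma factor_prod_inj m (s : seq C) (X : 'M[C]_(m, k)) :
  (forall z, z \in s -> `|z| < 1) -> X *m \prod_(z <- s) (1 - z *: S) = 0 -> X = 0.
Proof.
elim: s X => [|a s IH] X s_lt1; first by rewrite big_nil mulmx1.
rewrite big_cons -mulmxE mulmxA => /IH {}IH.
apply: (factor_inj (z := a)); first by apply: s_lt1; rewrite inE eqxx.
by apply: IH => z zs; apply: s_lt1; rewrite inE zs orbT.
Qed.

(* Kernel of the Stein operator: if every eigenvalue of N is in the open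
   unit disc, then X = N X S forces X = 0, by Cayley-Hamilton for N. *)
Lemma stein_ker0 q (N : 'M[C]_q) :
  (forall z, z \in eigenvalues N -> `|z| < 1) ->
  trivial_kernel (stein N S).
Proof.
case: q N => [|q] N N_lt1 X; first by rewrite [X]flatmx0.
move/eqP; rewrite subr_eq0 => /eqP/esym fixX.
move: N_lt1; rewrite /eigenvalues; case: closed_field_poly_normal => r /= charE.
rewrite (monicP (char_poly_monic N)) scale1r in charE.
have := Cayley_Hamilton N; rewrite charE rmorph_prod.
under eq_bigr => z _ do rewrite rmorphB /= horner_mx_X horner_mx_C.
move=> CH r_lt1; apply: factor_prod_inj r_lt1 _.
by rewrite -(stein_prod_transfer r fixX) CH !mul0mx.
Qed.

End SteinKernel.

Section HermitianForms.
Variable C : numClosedFieldType.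

Lemma mx11_tr (A : 'M[C]_1) : A 0 0 = A^T 0 0.
Proof. by rewrite mxE. Qed.

Lemma ctrmx_mul m n p (A : 'M[C]_(m, n)) (B : 'M[C]_(n, p)) :
  ctrmx (A *m B) = ctrmx B *m ctrmx A.
Proof. by rewrite /ctrmx map_mxM trmx_mul. Qed.

Lemma ctrmx_conj m n (A : 'M[C]_(m, n)) : ctrmx (map_mx Num.conj A) = A^T.
Proof. by congr trmx; apply/matrixP => i j; rewrite !mxE conjCK. Qed.

Lemma ctrmx_real m n (A : 'M[C]_(m, n)) : real_mx A -> ctrmx A = A^T.
Proof. by move=> /realE cA; rewrite /ctrmx cA. Qed.

Lemma cnorm_sum n (x : 'cV[C]_n) : (ctrmx x *m x) 0 0 = \sum_i `|x i 0| ^+ 2.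
Proof. by rewrite mxE; apply: eq_bigr => i _; rewrite !mxE normCKC. Qed.

Lemma cnorm_ge0 n (x : 'cV[C]_n) : 0 <= (ctrmx x *m x) 0 0.
Proof. by rewrite cnorm_sum; apply: sumr_ge0 => i _; apply: exprn_ge0. Qed.

Lemma cnorm_gt0 n (x : 'cV[C]_n) : x != 0 -> 0 < (ctrmx x *m x) 0 0.
Proof.
move=> x_nz; rewrite lt_def cnorm_ge0 andbT; apply: contra x_nz.
rewrite cnorm_sum => /eqP/psumr_eq0P x0; apply/eqP/matrixP => i j.
have {}x0 := x0 (fun i _ => exprn_ge0 2 (normr_ge0 (x i 0))).
rewrite ord1 mxE; have /eqP := x0 i isT.
by rewrite expf_eq0 /= normr_eq0 => /eqP.
Qed.

Lemma cV_rect n (x : 'cV[C]_n) : exists r s : 'cV[C]_n,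
  [/\ real_mx r, real_mx s, x = r + 'i *: s & ctrmx x = r^T - 'i *: s^T].
Proof.
exists (map_mx (fun z => 'Re z) x), (map_mx (fun z => 'Im z) x).
split; try by apply/mxOverP => i j; rewrite mxE ?Creal_Re ?Creal_Im.
  by apply/matrixP => i j; rewrite !mxE -Crect.
apply/matrixP => i j; rewrite !mxE {1}[x j i]Crect rmorphD rmorphM /= conjCi.
by rewrite !conj_Creal ?Creal_Re ?Creal_Im // mulNr.
Qed.

(* A symmetric form takes the value r^T P r + s^T P s at r + i s:
   the cross terms r^T P s and s^T P r cancel. *)
Lemma sym_form_rect n (P : 'M[C]_n) (r s : 'cV[C]_n) : P^T = P ->
  ((r^T - 'i *: s^T) *m P *m (r + 'i *: s)) 0 0 =
  (r^T *m P *m r) 0 0 + (s^T *m P *m s) 0 0.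
Proof.
move=> PT; have cross : r^T *m P *m s = s^T *m P *m r.
  by apply/matrixP => i j; rewrite !ord1 mx11_tr !trmx_mul trmxK PT mulmxA.
rewrite mulmxBl mulmxDr !mulmxBl -!scalemxAl -!scalemxAr scalerA mulCii scaleN1r.
by rewrite cross opprK addrA subrK mxE.
Qed.

Lemma posdef_complex n (P : 'M[C]_n) : posdef_real P ->
  forall x : 'cV[C]_n, x != 0 -> 0 < (ctrmx x *m P *m x) 0 0.
Proof.
move=> [[_ PT] P_pos] x x_nz.
have [r [s [rr rs xE cxE]]] := cV_rect x.
have form_ge0 (v : 'M[C]_(n, 1)) : real_mx v -> 0 <= (v^T *m P *m v) 0 0.
  move=> rv; have [->|v_nz] := eqVneq v 0; first by rewrite mulmx0 mxE.
  exact: ltW (P_pos v rv v_nz).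
rewrite cxE xE sym_form_rect //.
have [r0|r_nz] := eqVneq r 0; last exact: ltr_pwDl (P_pos r rr r_nz) (form_ge0 s rs).
have s_nz : s != 0 by apply: contra x_nz => /eqP s0; rewrite xE r0 s0 scaler0 addr0.
exact: ltr_wpDl (form_ge0 r rr) (P_pos s rs s_nz).
Qed.

Lemma posdef_unit n (P : 'M[C]_n) : posdef_real P -> P \in unitmx.
Proof.
move=> P_pd; rewrite unitmxE unitfE; apply/negP => /det0P [v v_nz vP0].
have PvT0 : P *m v^T = 0 by rewrite -P_pd.1.2 -trmx_mul vP0 trmx0.
have vT_nz : v^T != 0 by rewrite trmx_eq0.
have := posdef_complex P_pd vT_nz.
by rewrite -mulmxA PvT0 mulmx0 mxE ltxx.
Qed.

End HermitianForms.

Section PencilBound.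
Variable C : numClosedFieldType.

Lemma norm_le_of_sandwich (a u : C) : 0 < a -> 0 <= a + u -> 0 <= a - u -> `|u| <= a.
Proof.
move=> a_gt0 aDu aBu.
have u_real : u \is Num.real.
  rewrite -(addrK a u) (addrC u); apply: rpredB; apply: ger0_real => //.
  exact: ltW.
by rewrite real_ler_norml // -subr_ge0 aBu andbT -subr_ge0 opprK addrC.
Qed.

(* Generalized eigenvalues of the pencil (T, P): if P is positive definite,
   T antisymmetric and P + iT positive semi-definite, then T x = nu P x with
   x <> 0 forces |nu| <= 1.  Indeed x^* (P + iT) x and, by conjugation,
   x^* (P - iT) x are both nonnegative, i.e. a + i nu a >= 0 and
   a - i nu a >= 0 for a = x^* P x > 0. *)
Lemma pencil_bound n (P T : 'M[C]_n) : P^T = P -> T^T = - T ->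
  (forall x : 'cV[C]_n, 0 <= (ctrmx x *m (P + 'i *: T) *m x) 0 0) ->
  (forall x : 'cV[C]_n, x != 0 -> 0 < (ctrmx x *m P *m x) 0 0) ->
  forall (x : 'cV[C]_n) nu, x != 0 -> T *m x = nu *: (P *m x) -> `|nu| <= 1.
Proof.
move=> PT TT PiT_psd P_pos x nu x_nz Tx.
have form_pencil c : (ctrmx x *m (P + c *: T) *m x) 0 0 =
    (ctrmx x *m P *m x) 0 0 + c * nu * (ctrmx x *m P *m x) 0 0.
  by rewrite mulmxDr mulmxDl -scalemxAr -scalemxAl -(mulmxA _ T) Tx
    -scalemxAr mulmxA scalerA !mxE.
have PmiT_psd : 0 <= (ctrmx x *m (P + - 'i *: T) *m x) 0 0.
  have := PiT_psd (map_mx Num.conj x).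
  rewrite ctrmx_conj mx11_tr !trmx_mul trmxK -/(ctrmx x) mulmxA.
  by rewrite linearD /= linearZ /= PT TT scalerN scaleNr.
move: (PiT_psd x) PmiT_psd (P_pos x x_nz); rewrite !form_pencil.
set a := (ctrmx x *m P *m x) 0 0 => aDu aBu a_gt0.
rewrite mulNr mulNr in aBu; have := norm_le_of_sandwich a_gt0 aDu aBu.
rewrite !normrM normCi mul1r (gtr0_norm a_gt0).
by rewrite -[X in _ <= X]mul1r ler_pM2r.
Qed.

Lemma pencil_left_spectrum n (P T : 'M[C]_n) : P \in unitmx -> P^T = P -> T^T = - T ->
  (forall x : 'cV[C]_n, 0 <= (ctrmx x *m (P + 'i *: T) *m x) 0 0) ->
  (forall x : 'cV[C]_n, x != 0 -> 0 < (ctrmx x *m P *m x) 0 0) ->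
  left_spectrum_le1 (T *m invmx P).
Proof.
move=> P_unit PT TT PiT_psd P_pos w mu w_nz wE.
have /(congr1 (mulmx P)) : (w *m (T *m invmx P))^T = (mu *: w)^T by rewrite wE.
rewrite !trmx_mul linearZ /= trmx_inv PT TT mulmxN mulNmx mulmxN !mulmxA.
rewrite mulmxV // mul1mx -scalemxAr => /(congr1 -%R); rewrite opprK => Tw.
rewrite -normrN; apply: pencil_bound PT TT PiT_psd P_pos w^T _ _ _.
  by rewrite trmx_eq0.
by rewrite Tw scaleNr.
Qed.

End PencilBound.

Section RightFactors.
Variable C : numClosedFieldType.

Lemma theta_left_spectrum n (P T : 'M[C]_n) : posdef_real P -> antisym_real T ->
  psd_herm (P + 'i *: T) -> left_spectrum_le1 (T *m invmx P).
Proof.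
move=> P_pd [_ TT] [_ PiT_psd].
exact: pencil_left_spectrum (posdef_unit P_pd) P_pd.1.2 TT PiT_psd (posdef_complex P_pd).
Qed.

Lemma identity_posdef n (x : 'cV[C]_n) : x != 0 -> 0 < (ctrmx x *m 1%:M *m x) 0 0.
Proof. by rewrite mulmx1; exact: cnorm_gt0. Qed.

Lemma Jmx_real mu : real_mx (Jmx C mu).
Proof. by apply/realE; rewrite /Jmx map_block_mx map_mxN map_mx1 map_mx0. Qed.

Lemma Jmx_tr mu : (Jmx C mu)^T = - Jmx C mu.
Proof.
by rewrite /Jmx tr_block_mx !trmx0 linearN /= trmx1 opp_block_mx !oppr0 opprK.
Qed.

Lemma Jmx_sq mu : Jmx C mu *m Jmx C mu = - 1%:M.
Proof.
rewrite /Jmx mulmx_block !mul0mx !mulmx0 mul1mx mulmx1 !addr0 !add0r.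
by rewrite scalar_mx_block opp_block_mx !oppr0.
Qed.

(* 1 + iJ is Hermitian with (1 + iJ)^2 = 2 (1 + iJ), hence positive
   semi-definite: x^* (1 + iJ) x = |(1 + iJ) x|^2 / 2. *)
Lemma Jmx_psd mu (x : 'cV[C]_(mu + mu)) :
  0 <= (ctrmx x *m (1%:M + 'i *: Jmx C mu) *m x) 0 0.
Proof.
set M := 1%:M + 'i *: Jmx C mu.
have M_herm : ctrmx M = M.
  rewrite /ctrmx /M map_mxD map_mxZ map_mx1 ((realE _).1 (Jmx_real mu)) /= conjCi.
  by rewrite linearD /= linearZ /= trmx1 Jmx_tr scaleNr scalerN opprK.
have M_sq : M *m M = 2%:R *: M.
  rewrite /M mulmxDr !mulmxDl mul1mx mulmx1 mul1mx -scalemxAr -scalemxAl scalerA.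
  rewrite mulCii Jmx_sq scaleN1r opprK [_ + 1%:M]addrC.
  by rewrite -[2%:R]/(1 + 1) scalerDl scale1r.
have := cnorm_ge0 (M *m x).
rewrite ctrmx_mul M_herm mulmxA -(mulmxA _ M M) M_sq -scalemxAr -scalemxAl mxE.
by rewrite pmulr_rge0 // ltr0n.
Qed.

Lemma Jmx_left_spectrum mu : left_spectrum_le1 (Jmx C mu).
Proof.
have := pencil_left_spectrum (unitmx1 _ _) (trmx1 _ _) (Jmx_tr mu) (@Jmx_psd mu)
  (@identity_posdef _).
by rewrite invmx1 mulmx1.
Qed.

(* Delta = D J D^T with D real and D D^T = 1: the congruence by D keeps
   1 + i Delta = D (1 + iJ) D^T positive semi-definite. *)
Lemma Delta_left_spectrum mu p (D : 'M[C]_(p, mu + mu)) :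
  real_mx D -> D *m D^T = 1%:M -> left_spectrum_le1 (D *m Jmx C mu *m D^T).
Proof.
move=> rD DDT; set Delta := D *m Jmx C mu *m D^T.
have DeltaT : Delta^T = - Delta.
  by rewrite /Delta !trmx_mul trmxK Jmx_tr mulNmx mulmxN mulmxA.
have psd (x : 'M[C]_(p, 1)) : 0 <= (ctrmx x *m (1%:M + 'i *: Delta) *m x) 0 0.
  have -> : 1%:M + 'i *: Delta = D *m (1%:M + 'i *: Jmx C mu) *m D^T.
    by rewrite mulmxDr mulmx1 mulmxDl DDT -scalemxAr -scalemxAl.
  have := Jmx_psd (D^T *m x).
  by rewrite ctrmx_mul (ctrmx_real (realT rD)) trmxK !mulmxA.
have := pencil_left_spectrum (unitmx1 _ _) (trmx1 _ _) DeltaT psd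
  (@identity_posdef _).
by rewrite invmx1 mulmx1.
Qed.

End RightFactors.

Lemma spectral_radius_lt1 (C : numClosedFieldType) n (N : 'M[C]_n) :
  spectral_radius N < 1 -> forall z, z \in eigenvalues N -> `|z| < 1.
Proof.
rewrite /spectral_radius; elim: (eigenvalues N) => [|a s IH] //.
rewrite big_cons => rho_lt1 z; set m := \big[_/_]_(_ <- s) _ in rho_lt1.
have cmp : (`|a| >=< m)%O.
  apply: real_comparable; first exact: normr_real.
  by apply: bigmax_real => // i _; exact: normr_real.
rewrite inE => /orP [/eqP ->|zs].
  by apply: le_lt_trans rho_lt1; rewrite comparable_le_max // lexx.
by apply: IH zs; apply: le_lt_trans rho_lt1; rewrite comparable_le_max // lexx orbT.
Qed.

Unset Implicit Arguments. Set Strict Implicit.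

Theorem mainTheorem8 (C : numClosedFieldType) (q mu1 mu2 p : nat)
  (P22 Q22 Theta2 Xi : 'M[C]_q) (D : 'M[C]_(p, mu1 + mu1)) :
  ~~ odd q ->
  posdef_real P22 ->
  posdef_real Q22 ->
  antisym_real Theta2 ->
  Theta2 \in unitmx ->
  psd_herm (P22 + 'i *: Theta2) ->
  antisym_real Xi ->
  real_mx D ->
  D *m D^T = 1%:M ->
  let N := invmx Q22 *m Xi in
  let S := Theta2 *m invmx P22 in
  let Delta := D *m Jmx C mu1 *m D^T in
  spectral_radius N < 1 ->
  [/\ invertible_on_real (fun X : 'M[C]_(q, q) => X - N *m X *m S),
      invertible_on_real (fun X : 'M[C]_(q, mu2 + mu2) => X - N *m X *m Jmx C mu2)
    & invertible_on_real (fun X : 'M[C]_(q, p) => X - N *m X *m Delta)].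
Proof.
move=> _ P_pd Q_pd Theta_as _ PTheta_psd Xi_as rD DDT N S Delta.
rewrite {}/S {}/Delta => rho_lt1.
have rN : real_mx N by apply: realM; [apply: realV; exact: Q_pd.1.1|exact: Xi_as.1].
have N_lt1 := spectral_radius_lt1 rho_lt1.
split; apply: (stein_invertible rN).
- by apply: realM; [exact: Theta_as.1|apply: realV; exact: P_pd.1.1].
- exact (stein_ker0 (theta_left_spectrum P_pd Theta_as PTheta_psd) N_lt1).
- exact: Jmx_real.
- exact (stein_ker0 (@Jmx_left_spectrum C mu2) N_lt1).
- by apply: realM; [apply: realM => //; exact: Jmx_real|exact: realT].
- exact (stein_ker0 (Delta_left_spectrum rD DDT) N_lt1).
Qed.
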